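(* Let $H$ be a complex separable Hilbert space and let $S,T\in B(H)$ be positive normal operators with Cartesian decompositions $S=A+iC$ and $T=B+iD$, where $A,B,C,D$ are self-adjoint. Suppose there are real numbers $a_1,a_2,b_1,b_2,c_1,c_2,d_1,d_2$ such that $a_1\le A\le a_2$, $b_1\le B\le b_2$, $c_1\le C\le c_2$ and $d_1\le D\le d_2$. Then $$\|ST-TS\|\le \frac12\sqrt{(a_2-a_1)^2+(c_2-c_1)^2}\,\sqrt{(b_2-b_1)^2+(d_2-d_1)^2}.$$
   Context: $B(H)$ denotes the algebra of bounded linear operators on $H$ with the operator norm. The Cartesian decomposition of $S\in B(H)$ is $S=A+iC$ with $A=\frac{S+S^*}{2}$ and $C=\frac{S-S^*}{2i}$ self-adjoint. For a self-adjoint operator $A$ and real $\alpha$, $\alpha\le A$ means $A-\alpha I$ is positive, and $A\le\alpha$ means $\alpha I-A$ is positive. *)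

From HB Require Import structures.
From mathcomp Require Import all_boot all_order all_algebra.
From mathcomp Require Import complex.
From mathcomp Require Import reals.
Set Implicit Arguments. Unset Strict Implicit. Unset Printing Implicit Defensive.
Import Order.TTheory GRing.Theory Num.Theory.
Local Open Scope ring_scope.

Section Hilbert.
Variables (R : realType) (V : lmodType R[i]) (ip : V -> V -> R[i]).

(* inner product: linear in the first argument, conjugate symmetric,
   positive definite (0 <= z in R[i] means z is real and nonnegative) *)
Definition inner_product : Prop :=
  [/\ forall (a : R[i]) (x y z : V), ip (a *: x + y) z = a * ip x z + ip y z,
      forall x y : V, ip y x = Num.conj (ip x y),
      forall x : V, 0 <= ip x x &
      forall x : V, ip x x = 0 -> x = 0].

Definition hnorm (x : V) : R := Num.sqrt (complex.Re (ip x x)).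

Definition hcomplete : Prop :=
  forall u : nat -> V,
    (forall e : R, 0 < e -> exists N : nat, forall m n : nat,
        (N <= m)%N -> (N <= n)%N -> hnorm (u m - u n) < e) ->
    exists l : V, forall e : R, 0 < e -> exists N : nat, forall n : nat,
        (N <= n)%N -> hnorm (u n - l) < e.

Definition hseparable : Prop :=
  exists d : nat -> V, forall (x : V) (e : R), 0 < e ->
    exists n : nat, hnorm (x - d n) < e.

Definition separable_hilbert_space : Prop :=
  [/\ inner_product, hcomplete & hseparable].

Definition bounded_op (f : V -> V) : Prop :=
  (forall (a : R[i]) (x y : V), f (a *: x + y) = a *: f x + f y) /\
  exists M : R, forall x : V, hnorm (f x) <= M * hnorm x.

Definition is_adjoint (f g : V -> V) : Prop :=
  forall x y : V, ip (f x) y = ip x (g y).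

Definition self_adjoint (f : V -> V) : Prop := is_adjoint f f.

Definition normal_op (f : V -> V) : Prop :=
  exists g : V -> V, [/\ bounded_op g, is_adjoint f g &
                        forall x : V, f (g x) = g (f x)].

Definition positive_op (f : V -> V) : Prop :=
  forall x : V, 0 <= ip (f x) x.

Definition op_ge (f : V -> V) (alpha : R) : Prop :=
  positive_op (fun x => f x - (alpha%:C)%C *: x).

Definition op_le (f : V -> V) (alpha : R) : Prop :=
  positive_op (fun x => (alpha%:C)%C *: x - f x).

Definition opnorm (f : V -> V) : R :=
  sup (fun r : R => exists x : V, hnorm x <= 1 /\ r = hnorm (f x)).

End Hilbert.

From HB Require Import structures.
From mathcomp Require Import all_boot all_order all_algebra.
From mathcomp Require Import complex.
From mathcomp Require Import reals.
From mathcomp Require Import ring lra.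
Import Order.TTheory GRing.Theory Num.Theory.
Local Open Scope ring_scope.

(* A positive operator on a complex Hilbert space is self-adjoint, so C = D = 0, S = A and
   T = B.  Shifting A and B by the midpoints of their numerical ranges does not change the
   commutator, and a self-adjoint operator with numerical range in [-k, k] has norm at most k.
   For the shifted X, Y and z = XYx - YXx one has ||z||^2 = <Yx, Xz> - <Xx, Yz>, whence
   ||[A, B]|| <= 2 ||X|| ||Y|| <= (a2 - a1)(b2 - b1) / 2, which is below the claimed bound.
   Everything only uses Re <x, y>, a real inner product inducing the norm of H. *)

Section RealQuadratics.
Context {R : realFieldType}.

Lemma quad_ge0_sqr_le (a b c : R) : 0 <= a -> 0 <= c ->
  (forall s t : R, 0 <= s ^+ 2 * a + 2 * s * t * b + t ^+ 2 * c) -> b ^+ 2 <= a * c.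
Proof.
move=> a_ge0 c_ge0 quad_ge0.
have [a_gt0 | a_le0] := ltrP 0 a; first by have := quad_ge0 b (- a); nra.
have [c_gt0 | c_le0] := ltrP 0 c; first by have := quad_ge0 (- c) b; nra.
by have := quad_ge0 b (-1); nra.
Qed.

Lemma quad_le_sqr_mul (k u v : R) : 0 <= k -> 0 <= v ->
  (forall a b : R, 2 * a * b * v <= k * (a ^+ 2 * u + b ^+ 2 * v)) -> v <= k ^+ 2 * u.
Proof.
move=> k_ge0 v_ge0 quad_le.
have [k_gt0 | k_le0] := ltrP 0 k.
  rewrite -subr_ge0 -(pmulr_rge0 _ k_gt0); have := quad_le k 1; rewrite expr1n mulr1 mul1r; nra.
have k0 : k = 0 by apply/eqP; rewrite eq_le k_le0 k_ge0.
by have := quad_le 1 1; rewrite k0 mul0r expr0n mul0r; lra.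
Qed.

End RealQuadratics.

Lemma ler_norm_sqrtD {R : rcfType} (x y : R) : `|x| <= Num.sqrt (x ^+ 2 + y ^+ 2).
Proof. by rewrite -sqrtr_sqr ler_wsqrtr // lerDl sqr_ge0. Qed.

Lemma Re_ge0 {R : realType} (z : R[i]) : 0 <= z -> 0 <= complex.Re z.
Proof. by rewrite lecE => /andP[]. Qed.

Section RealPartOfInnerProduct.
Context {R : realType} {V : lmodType R[i]} {ip : V -> V -> R[i]}.
Hypothesis ipP : inner_product ip.

Definition rinner (x y : V) : R := complex.Re (ip x y).

Lemma ipDl x y z : ip (x + y) z = ip x z + ip y z.
Proof. by have [ip_lin _ _ _] := ipP; have := ip_lin 1 x y z; rewrite scale1r mul1r. Qed.

Lemma ip0l z : ip 0 z = 0.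
Proof. by apply/(addrI (ip 0 z)); rewrite -ipDl !addr0. Qed.

Lemma ipZl a x z : ip (a *: x) z = a * ip x z.
Proof. by have [ip_lin _ _ _] := ipP; have := ip_lin a x 0 z; rewrite !addr0 ip0l addr0. Qed.

Lemma rinnerC x y : rinner x y = rinner y x.
Proof. by have [_ ipC _ _] := ipP; rewrite /rinner (ipC x y); case: (ip x y). Qed.

Lemma rinnerDl x y z : rinner (x + y) z = rinner x z + rinner y z.
Proof. by rewrite /rinner ipDl raddfD. Qed.

Lemma rinnerZl (r : R) x z : rinner (r%:C%C *: x) z = r * rinner x z.
Proof. by rewrite /rinner ipZl; case: (ip x z) => u v /=; rewrite mul0r subr0. Qed.

Lemma rinnerNl x z : rinner (- x) z = - rinner x z.
Proof. by rewrite -scaleN1r -(rmorphN1 (real_complex R)) rinnerZl mulN1r. Qed.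

Lemma rinnerBl x y z : rinner (x - y) z = rinner x z - rinner y z.
Proof. by rewrite rinnerDl rinnerNl. Qed.

Lemma rinnerDr x y z : rinner z (x + y) = rinner z x + rinner z y.
Proof. by rewrite rinnerC rinnerDl !(rinnerC z). Qed.

Lemma rinnerBr x y z : rinner z (x - y) = rinner z x - rinner z y.
Proof. by rewrite rinnerC rinnerBl !(rinnerC z). Qed.

Lemma rinnerZr (r : R) x z : rinner z (r%:C%C *: x) = r * rinner z x.
Proof. by rewrite rinnerC rinnerZl rinnerC. Qed.

Lemma rinner_expand (a b : R) (x y x' y' : V) :
  rinner (a%:C%C *: x + b%:C%C *: y) (a%:C%C *: x' + b%:C%C *: y') =
  a ^+ 2 * rinner x x' + a * b * (rinner x y' + rinner y x') + b ^+ 2 * rinner y y'.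
Proof. by rewrite !rinnerDl !rinnerDr !rinnerZl !rinnerZr; ring. Qed.

Lemma rinnerxx_ge0 x : 0 <= rinner x x.
Proof. by have [_ _ ip_ge0 _] := ipP; apply: Re_ge0. Qed.

Lemma rinnerxx_eq0 x : rinner x x = 0 -> x = 0.
Proof.
have [_ _ ip_ge0 ip_eq0] := ipP => Re0; apply: ip_eq0.
by apply/eqP; rewrite eq_complex /= -/(rinner x x) Re0 (ger0_Im (ip_ge0 x)) eqxx.
Qed.

Lemma hnormE x : hnorm ip x = Num.sqrt (rinner x x).
Proof. by []. Qed.

Lemma hnorm_sqr x : hnorm ip x ^+ 2 = rinner x x.
Proof. exact: sqr_sqrtr (rinnerxx_ge0 x). Qed.

Lemma hnorm0 : hnorm ip 0 = 0.
Proof. by rewrite hnormE /rinner ip0l sqrtr0. Qed.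

Lemma rinner_le_hnorm x y : `|rinner x y| <= hnorm ip x * hnorm ip y.
Proof.
have cs : rinner x y ^+ 2 <= rinner x x * rinner y y.
  apply: quad_ge0_sqr_le (rinnerxx_ge0 x) (rinnerxx_ge0 y) _ => s t.
  suff -> : s ^+ 2 * rinner x x + 2 * s * t * rinner x y + t ^+ 2 * rinner y y =
            rinner (s%:C%C *: x + t%:C%C *: y) (s%:C%C *: x + t%:C%C *: y).
    exact: rinnerxx_ge0.
  by rewrite rinner_expand (rinnerC y x); ring.
rewrite -!hnorm_sqr -exprMn in cs.
have xy_ge0 : 0 <= hnorm ip x * hnorm ip y by rewrite mulr_ge0 ?sqrtr_ge0.
by rewrite ler_norml; apply/andP; split; nra.
Qed.

Definition rsymmetric (f : V -> V) := forall x y, rinner (f x) y = rinner x (f y).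

Lemma self_adjoint_rsymmetric {f} : self_adjoint ip f -> rsymmetric f.
Proof. by move=> f_sa x y; rewrite /rinner f_sa. Qed.

Lemma rsymmetric_subZ {f} (r : R) : rsymmetric f -> rsymmetric (fun y => f y - r%:C%C *: y).
Proof. by move=> f_sym x y; rewrite rinnerBl rinnerBr rinnerZl rinnerZr f_sym. Qed.

Lemma Im_ip_self_adjoint {f} x : self_adjoint ip f -> complex.Im (ip (f x) x) = 0.
Proof.
have [_ ipC _ _] := ipP => f_sa.
by move: (etrans (f_sa x x) (ipC _ _)); case: (ip (f x) x) => u v [vN] /=; lra.
Qed.

Lemma op_ge_rinner {f a} x : op_ge ip f a -> a * rinner x x <= rinner (f x) x.
Proof. by move=> /(_ x)/Re_ge0; rewrite -[complex.Re _]/(rinner _ _) rinnerBl rinnerZl subr_ge0. Qed.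

Lemma op_le_rinner {f a} x : op_le ip f a -> rinner (f x) x <= a * rinner x x.
Proof. by move=> /(_ x)/Re_ge0; rewrite -[complex.Re _]/(rinner _ _) rinnerBl rinnerZl subr_ge0. Qed.

Section LinearOperator.
Context {f : V -> V} (f_lin : linear f).
HB.instance Definition _ := GRing.isLinear.Build R[i] V V *:%R f f_lin.

Lemma linear_subZ (c : R[i]) : linear (fun y => f y - c *: y).
Proof. by move=> a x y; rewrite linearP scalerDr scalerBr !scalerA (mulrC c) opprD addrACA. Qed.

Hypothesis f_sym : rsymmetric f.

Lemma rsymmetric_hnorm_le (k : R) : 0 <= k ->
  (forall x, `|rinner (f x) x| <= k * rinner x x) -> forall x, hnorm ip (f x) <= k * hnorm ip x.
Proof.
move=> k_ge0 f_k x.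
have f_comb (a b : R) : f (a%:C%C *: x + b%:C%C *: f x) = a%:C%C *: f x + b%:C%C *: f (f x).
  by rewrite linearD !linearZ.
have sq : rinner (f x) (f x) <= k ^+ 2 * rinner x x.
  apply: quad_le_sqr_mul k_ge0 (rinnerxx_ge0 _) _ => a b.
  (* the numerical-range bound at a x + b f x and at a x - b f x *)
  move: (f_k (a%:C%C *: x + b%:C%C *: f x)) (f_k (a%:C%C *: x + (- b)%:C%C *: f x)).
  rewrite !ler_norml !f_comb !rinner_expand (f_sym (f x) x) (rinnerC x (f x)).
  by case/andP=> _ up /andP[lo _]; nra.
rewrite !hnormE -(ger0_norm k_ge0) -sqrtr_sqr -sqrtrM ?sqr_ge0 //.
exact: ler_wsqrtr.
Qed.

Lemma rsymmetric_rinner0_eq0 : (forall x, rinner (f x) x = 0) -> forall x, f x = 0.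
Proof.
move=> f0 x; apply: rinnerxx_eq0.
have fx_le0 : hnorm ip (f x) <= 0.
  by rewrite -(mul0r (hnorm ip x)); apply: rsymmetric_hnorm_le => // y; rewrite f0 normr0 mul0r.
by rewrite -hnorm_sqr; apply/eqP; rewrite sqrf_eq0 eq_le fx_le0 sqrtr_ge0.
Qed.

End LinearOperator.

Lemma hnorm_sub_midpoint_le {f} {a1 a2 : R} :
  linear f -> self_adjoint ip f -> op_ge ip f a1 -> op_le ip f a2 ->
  forall x, hnorm ip (f x - ((a1 + a2) / 2)%:C%C *: x) <= `|a2 - a1| / 2 * hnorm ip x.
Proof.
move=> f_lin f_sa f_a1 f_a2.
have f_sym := rsymmetric_subZ ((a1 + a2) / 2) (self_adjoint_rsymmetric f_sa).
apply: (rsymmetric_hnorm_le (linear_subZ f_lin _) f_sym); first by rewrite divr_ge0.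
move=> x; rewrite rinnerBl rinnerZl ler_norml.
have := op_ge_rinner x f_a1; have := op_le_rinner x f_a2; have := rinnerxx_ge0 x.
have := ler_norm (a2 - a1); rewrite distrC; have := ler_norm (a1 - a2).
by move=> *; apply/andP; split; nra.
Qed.

Lemma positive_cartesian_re {S A C} :
  linear C -> self_adjoint ip A -> self_adjoint ip C -> positive_op ip S ->
  (forall x, S x = A x + 'i%C *: C x) -> forall x, S x = A x.
Proof.
move=> C_lin A_sa C_sa S_pos S_dec x.
rewrite S_dec; suff -> : C x = 0 by rewrite scaler0 addr0.
apply: (rsymmetric_rinner0_eq0 C_lin (self_adjoint_rsymmetric C_sa)) => y.
have := ger0_Im (S_pos y).
by rewrite S_dec ipDl ipZl raddfD /= (Im_ip_self_adjoint y A_sa) add0r mulrC ImiRe.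
Qed.

Lemma hnorm_commutator_le {X Y} {kx ky : R} :
  rsymmetric X -> rsymmetric Y -> 0 <= kx -> 0 <= ky ->
  (forall y, hnorm ip (X y) <= kx * hnorm ip y) ->
  (forall y, hnorm ip (Y y) <= ky * hnorm ip y) ->
  forall x, hnorm ip (X (Y x) - Y (X x)) <= 2 * kx * ky * hnorm ip x.
Proof.
move=> X_sym Y_sym kx_ge0 ky_ge0 X_k Y_k x.
set z := X (Y x) - Y (X x).
have zz : rinner z z = rinner (Y x) (X z) - rinner (X x) (Y z).
  by rewrite {1}/z rinnerBl (X_sym (Y x)) (Y_sym (X x)).
have n_ge0 := @sqrtr_ge0 R.
have YX : hnorm ip (Y x) * hnorm ip (X z) <= ky * hnorm ip x * (kx * hnorm ip z).
  by apply: ler_pM; rewrite ?n_ge0.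
have XY : hnorm ip (X x) * hnorm ip (Y z) <= kx * hnorm ip x * (ky * hnorm ip z).
  by apply: ler_pM; rewrite ?n_ge0.
have cs1 := le_trans (ler_norm _) (rinner_le_hnorm (Y x) (X z)).
move: (rinner_le_hnorm (X x) (Y z)); rewrite ler_norml => /andP[cs2 _].
have z2 : hnorm ip z ^+ 2 <= 2 * kx * ky * hnorm ip x * hnorm ip z.
  by rewrite hnorm_sqr zz; lra.
have c_ge0 : 0 <= 2 * kx * ky * hnorm ip x by rewrite !mulr_ge0 ?n_ge0.
move: z2 c_ge0 (n_ge0 (rinner z z)); rewrite -hnormE; set c := 2 * _ * _ * _; nra.
Qed.

Lemma opnorm_le {f} {M : R} :
  0 <= M -> (forall x, hnorm ip (f x) <= M * hnorm ip x) -> opnorm ip f <= M.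
Proof.
move=> M_ge0 f_M; apply: ge_sup; first by exists (hnorm ip (f 0)), 0; rewrite hnorm0 ler01.
move=> _ [x [x_le1 ->]]; apply: le_trans (f_M x) _.
have := @sqrtr_ge0 R (rinner x x); rewrite -hnormE; nra.
Qed.

End RealPartOfInnerProduct.

Lemma commutator_subZ {R : realType} {V : lmodType R[i]} {f g : V -> V} (c d : R[i]) x :
  linear f -> linear g ->
  (f (g x - d *: x) - c *: (g x - d *: x)) - (g (f x - c *: x) - d *: (f x - c *: x)) =
  f (g x) - g (f x).
Proof.
have linBZ (h : V -> V) (a : R[i]) (y z : V) : linear h -> h (y - a *: z) = h y - a *: h z.
  move=> h_lin; rewrite [y - _]addrC -scaleNr.
  by have /= -> := h_lin (- a) z y; rewrite scaleNr addrC.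
move=> f_lin g_lin; rewrite (linBZ f) // (linBZ g) // !scalerBr !scalerA (mulrC c d).
by rewrite -(addrA (f (g x))) -(addrA (g (f x))) -!opprD (addrCA (d *: f x)) opprB subrKA.
Qed.

Theorem mainTheorem1 (R : realType) (V : lmodType R[i]) (ip : V -> V -> R[i])
  (HH : separable_hilbert_space ip)
  (S T A B C D : V -> V)
  (hS : bounded_op ip S) (hT : bounded_op ip T)
  (posS : positive_op ip S) (posT : positive_op ip T)
  (nS : normal_op ip S) (nT : normal_op ip T)
  (hA : bounded_op ip A) (hB : bounded_op ip B)
  (hC : bounded_op ip C) (hD : bounded_op ip D)
  (sA : self_adjoint ip A) (sB : self_adjoint ip B)
  (sC : self_adjoint ip C) (sD : self_adjoint ip D)
  (decS : forall x, S x = A x + ('i)%C *: C x)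
  (decT : forall x, T x = B x + ('i)%C *: D x)
  (a1 a2 b1 b2 c1 c2 d1 d2 : R)
  (ha1 : op_ge ip A a1) (ha2 : op_le ip A a2)
  (hb1 : op_ge ip B b1) (hb2 : op_le ip B b2)
  (hc1 : op_ge ip C c1) (hc2 : op_le ip C c2)
  (hd1 : op_ge ip D d1) (hd2 : op_le ip D d2) :
  opnorm ip (fun x => S (T x) - T (S x)) <=
    2^-1 * Num.sqrt ((a2 - a1) ^+ 2 + (c2 - c1) ^+ 2)
         * Num.sqrt ((b2 - b1) ^+ 2 + (d2 - d1) ^+ 2).
Proof.
have [ipP _ _] := HH.
case: hA hB hC hD => [A_lin _] [B_lin _] [C_lin _] [D_lin _].
have S_A := positive_cartesian_re ipP C_lin sA sC posS decS.
have T_B := positive_cartesian_re ipP D_lin sB sD posT decT.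
have kA_ge0 : 0 <= `|a2 - a1| / 2 by rewrite divr_ge0.
have kB_ge0 : 0 <= `|b2 - b1| / 2 by rewrite divr_ge0.
apply: (opnorm_le ipP); first by rewrite !mulr_ge0 ?invr_ge0 ?sqrtr_ge0.
move=> x; rewrite !S_A !T_B.
rewrite -(commutator_subZ ((a1 + a2) / 2)%:C%C ((b1 + b2) / 2)%:C%C x A_lin B_lin).
apply: le_trans (hnorm_commutator_le ipP (rsymmetric_subZ ipP _ (self_adjoint_rsymmetric sA))
  (rsymmetric_subZ ipP _ (self_adjoint_rsymmetric sB)) kA_ge0 kB_ge0
  (hnorm_sub_midpoint_le ipP A_lin sA ha1 ha2) (hnorm_sub_midpoint_le ipP B_lin sB hb1 hb2) x) _.
rewrite ler_wpM2r ?sqrtr_ge0 //.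
have := ler_norm_sqrtD (a2 - a1) (c2 - c1); have := ler_norm_sqrtD (b2 - b1) (d2 - d1).
have := normr_ge0 (a2 - a1); have := normr_ge0 (b2 - b1); nra.
Qed.
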